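(* If $(A,W)$ is a $T_1$ Pratt comonoid and $A_0$ is a finite subset of $A$, then for every subset $y\subseteq A_0$ there exists $x\in W$ with $x\cap A_0=y$.
   Context: A Pratt comonoid is a pair $(A,W)$ where $A$ is a set and $W$ is a set of subsets of $A$ such that (i) $\emptyset\in W$ and $A\in W$; (ii) whenever $C\subseteq A\times A$ is such that for every $a\in A$ both the $a$-th row $\{b\mid (a,b)\in C\}$ and the $a$-th column $\{b\mid (b,a)\in C\}$ belong to $W$ (a crossword over $W$), the diagonal $\{b\mid (b,b)\in C\}$ also belongs to $W$. $(A,W)$ is $T_1$ if for all distinct $a,b\in A$ some member of $W$ contains $a$ but not $b$. *)

(* Subsets of the carrier A are predicates A -> Prop;
   the carrier set itself is the whole type A. *)
From Stdlib Require Import List.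

Definition pratt_comonoid (A : Type) (W : (A -> Prop) -> Prop) : Prop :=
  W (fun _ => False) /\ W (fun _ => True) /\
  forall C : A -> A -> Prop,
    (forall a, W (fun b => C a b) /\ W (fun b => C b a)) ->
    W (fun b => C b b).

Definition pratt_T1 (A : Type) (W : (A -> Prop) -> Prop) : Prop :=
  forall a b : A, a <> b -> exists x, W x /\ x a /\ ~ x b.

Definition finite_subset (A : Type) (A0 : A -> Prop) : Prop :=
  exists l : list A, forall a, A0 a <-> In a l.

(* The crossword C a b := U a /\ V b has every row and column equal to
   U, V or the empty set, and its diagonal is the intersection of U and V;
   with \/ instead of /\ the rows and columns are U, V or the whole carrier
   and the diagonal is the union.  So W is closed under finite intersections
   and unions.  By T_1, intersecting finitely many members of W separates a
   point of y from the finitely many points of A0 outside y, and the union of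
   these separating sets over the points of y cuts A0 exactly in y. *)
From Stdlib Require Import List Classical FunctionalExtensionality PropExtensionality.

Section PrattComonoid.

Variables (A : Type) (W : (A -> Prop) -> Prop).

Lemma W_ext (U V : A -> Prop) : W U -> (forall b, U b <-> V b) -> W V.
Proof.
  intros HU HUV.
  replace V with U; [exact HU |].
  apply functional_extensionality; intro b.
  apply propositional_extensionality; apply HUV.
Qed.

Hypothesis HW : pratt_comonoid A W.

Lemma W_and_const (P : Prop) (V : A -> Prop) : W V -> W (fun b => P /\ V b).
Proof.
  destruct HW as [W0 _]; intro HV.
  destruct (classic P) as [HP | HnP].
  - apply (W_ext V); [exact HV | tauto].
  - apply (W_ext (fun _ => False)); [exact W0 | tauto].
Qed.

Lemma W_or_const (P : Prop) (V : A -> Prop) : W V -> W (fun b => P \/ V b).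
Proof.
  destruct HW as [_ [WT _]]; intro HV.
  destruct (classic P) as [HP | HnP].
  - apply (W_ext (fun _ => True)); [exact WT | tauto].
  - apply (W_ext V); [exact HV | tauto].
Qed.

Lemma W_inter (U V : A -> Prop) : W U -> W V -> W (fun b => U b /\ V b).
Proof.
  destruct HW as [_ [_ Hcross]]; intros HU HV.
  apply (Hcross (fun a b => U a /\ V b)); intro a; split.
  - exact (W_and_const (U a) V HV).
  - apply (W_ext (fun b => V a /\ U b)); [exact (W_and_const (V a) U HU) | tauto].
Qed.

Lemma W_union (U V : A -> Prop) : W U -> W V -> W (fun b => U b \/ V b).
Proof.
  destruct HW as [_ [_ Hcross]]; intros HU HV.
  apply (Hcross (fun a b => U a \/ V b)); intro a; split.
  - exact (W_or_const (U a) V HV).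
  - apply (W_ext (fun b => V a \/ U b)); [exact (W_or_const (V a) U HU) | tauto].
Qed.

Lemma W_avoid_list (HT1 : pratt_T1 A W) (a : A) (N : A -> Prop) (l : list A) :
  (forall b, In b l -> N b -> a <> b) ->
  exists x, W x /\ x a /\ forall b, In b l -> N b -> ~ x b.
Proof.
  induction l as [| c l IH]; intro Hdiff.
  - exists (fun _ => True); destruct HW as [_ [WT _]].
    split; [exact WT | split; [exact I | intros b []]].
  - destruct IH as [x [Wx [xa Hx]]]; [intros b Hb; apply Hdiff; right; exact Hb |].
    destruct (classic (N c)) as [Nc | nNc].
    + destruct (HT1 a c (Hdiff c (or_introl eq_refl) Nc)) as [z [Wz [za zc]]].
      exists (fun b => x b /\ z b); split; [exact (W_inter x z Wx Wz) |].
      split; [split; assumption |].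
      intros b [<- | Hb] Nb [xb zb]; [exact (zc zb) | exact (Hx b Hb Nb xb)].
    + exists x; split; [exact Wx | split; [exact xa |]].
      intros b [<- | Hb] Nb; [contradiction | exact (Hx b Hb Nb)].
Qed.

Lemma W_cover_list (P N : A -> Prop) (l : list A) :
  (forall a, In a l -> P a -> exists x, W x /\ x a /\ forall b, N b -> ~ x b) ->
  exists x, W x /\ (forall a, In a l -> P a -> x a) /\ forall b, N b -> ~ x b.
Proof.
  induction l as [| c l IH]; intro Hsep.
  - exists (fun _ => False); destruct HW as [W0 _].
    split; [exact W0 | split; [intros a [] | intros b _ []]].
  - destruct IH as [x [Wx [Px Nx]]]; [intros a Ha; apply Hsep; right; exact Ha |].
    destruct (classic (P c)) as [Pc | nPc].
    + destruct (Hsep c (or_introl eq_refl) Pc) as [z [Wz [zc Nz]]].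
      exists (fun b => x b \/ z b); split; [exact (W_union x z Wx Wz) |].
      split.
      * intros a [<- | Ha] Pa; [right; exact zc | left; exact (Px a Ha Pa)].
      * intros b Nb [xb | zb]; [exact (Nx b Nb xb) | exact (Nz b Nb zb)].
    + exists x; split; [exact Wx | split; [| exact Nx]].
      intros a [<- | Ha] Pa; [contradiction | exact (Px a Ha Pa)].
Qed.

End PrattComonoid.

Theorem lemma3p1 (A : Type) (W : (A -> Prop) -> Prop)
  (HW : pratt_comonoid A W) (HT1 : pratt_T1 A W)
  (A0 : A -> Prop) (Hfin : finite_subset A A0)
  (y : A -> Prop) (Hy : forall a, y a -> A0 a) :
  exists x, W x /\ forall a, (x a /\ A0 a) <-> y a.
Proof.
  destruct Hfin as [L HL].
  set (outside := fun b => In b L /\ ~ y b).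
  assert (Hsep : forall a, In a L -> y a ->
            exists x, W x /\ x a /\ forall b, outside b -> ~ x b).
  { intros a _ ya.
    destruct (W_avoid_list A W HW HT1 a (fun b => ~ y b) L) as [x [Wx [xa Hx]]].
    - intros b _ nyb ->; exact (nyb ya).
    - exists x; split; [exact Wx | split; [exact xa |]].
      intros b [Lb nyb]; exact (Hx b Lb nyb). }
  destruct (W_cover_list A W HW y outside L Hsep) as [x [Wx [Hin Hout]]].
  exists x; split; [exact Wx |]; intro a; split.
  - intros [xa A0a]; apply NNPP; intro nya.
    exact (Hout a (conj (proj1 (HL a) A0a) nya) xa).
  - intro ya; split; [| exact (Hy a ya)].
    exact (Hin a (proj1 (HL a) (Hy a ya)) ya).
Qed.
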